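(* Let $g\ge1$ and $n\ge3$. Let $H$ be a group and $\lambda:B_n(\Sigma_g)\to H$ a surjective homomorphism such that $\lambda(\iota_n(B_n))$ is isomorphic to $\mathbb{Z}$. Then there is an isomorphism $\iota:H\to B_n(\Sigma_g)/\Gamma_3(B_n(\Sigma_g))$ such that $\iota\circ\lambda$ sends each generator $\sigma_1,\dots,\sigma_{n-1},a_1,b_1,\dots,a_g,b_g$ of $B_n(\Sigma_g)$ to its class in $B_n(\Sigma_g)/\Gamma_3(B_n(\Sigma_g))$.
   Context: $\Sigma_g$: compact connected orientable surface of genus $g\ge1$ with one boundary component; $B_n(\Sigma_g)=\pi_1(F_n(\Sigma_g)/S_n)$; $\Gamma_1(G)=G$, $\Gamma_i(G)=[G,\Gamma_{i-1}(G)]$. $\iota_n:B_n\to B_n(\Sigma_g)$ is the (injective) homomorphism induced by an embedding of a disc in $\Sigma_g$; its image is the subgroup generated by $\sigma_1,\dots,\sigma_{n-1}$. $B_n(\Sigma_g)$ has the presentation with generators $\sigma_1,\dots,\sigma_{n-1},a_1,b_1,\dots,a_g,b_g$ and relations: $\sigma_i\sigma_j=\sigma_j\sigma_i$ for $|i-j|\ge2$; $\sigma_i\sigma_{i+1}\sigma_i=\sigma_{i+1}\sigma_i\sigma_{i+1}$ for $1\le i\le n-2$; $c\sigma_j=\sigma_jc$ for $c\in\{a_i,b_i\}$, $j\ge2$; $c\sigma_1c\sigma_1=\sigma_1c\sigma_1c$ for $c\in\{a_i,b_i\}$; $a_i\sigma_1b_i=\sigma_1b_i\sigma_1a_i\sigma_1$;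 $c_i(\sigma_1^{-1}c_j\sigma_1)=(\sigma_1^{-1}c_j\sigma_1)c_i$ for $c_i\in\{a_i,b_i\}$, $c_j\in\{a_j,b_j\}$, $1\le j<i\le g$. *)

From mathcomp Require Import all_boot.
From mathcomp Require Import ssrint.
Set Implicit Arguments. Unset Strict Implicit. Unset Printing Implicit Defensive.

Record group := Group {
  gcar :> Type;
  gmul : gcar -> gcar -> gcar;
  ginv : gcar -> gcar;
  gone : gcar;
  gmulA : forall x y z, gmul x (gmul y z) = gmul (gmul x y) z;
  gmul1 : forall x, gmul gone x = x;
  gmulV : forall x, gmul (ginv x) x = gone
}.

Section SetoidGroupNotions.
Variables (T : Type) (eqT : T -> T -> Prop) (mul : T -> T -> T)
          (inv : T -> T) (one : T).

Definition commut (x y : T) : T := mul (mul (inv x) (inv y)) (mul x y).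

Inductive gensub (S : T -> Prop) : T -> Prop :=
| gs_gen x : S x -> gensub S x
| gs_one : gensub S one
| gs_mul x y : gensub S x -> gensub S y -> gensub S (mul x y)
| gs_inv x : gensub S x -> gensub S (inv x)
| gs_eq x y : eqT x y -> gensub S x -> gensub S y.

Definition commsub (K : T -> Prop) : T -> Prop :=
  gensub (fun c => exists x k, K k /\ c = commut x k).

(* lower central series; lcs i = Gamma_i for i >= 1 (lcs 0 := G too) *)
Fixpoint lcs (i : nat) : T -> Prop :=
  match i with
  | 0 => fun _ => True
  | S j => match j with
           | 0 => fun _ => True
           | S _ => commsub (lcs j)
           end
  end.
End SetoidGroupNotions.

(* Generators (0-based): Sig i = sigma_{i+1} (i < n-1), Ga k = a_{k+1},    *)
(* Gb k = b_{k+1} (k < g).                                                *)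
Inductive sbgen (n g : nat) : Type :=
| Sig of 'I_n.-1
| Ga of 'I_g
| Gb of 'I_g.

(* a letter is a generator together with an exponent flag (true = inverse) *)
Definition sbword (n g : nat) := seq (sbgen n g * bool).

Definition lt1 n g (x : sbgen n g) : sbgen n g * bool := (x, false).
Definition lti n g (x : sbgen n g) : sbgen n g * bool := (x, true).

Definition wmul n g (u v : sbword n g) : sbword n g := u ++ v.
Definition winv n g (u : sbword n g) : sbword n g :=
  rev (map (fun l => (l.1, ~~ l.2)) u).
Definition wone n g : sbword n g := [::].

Definition surfgen n g (x : sbgen n g) (k : 'I_g) : Prop := x = Ga n k \/ x = Gb n k.

Inductive sbrel (n g : nat) : sbword n g -> sbword n g -> Prop :=
| r_far (i j : 'I_n.-1) : (i + 2 <= j)%N || (j + 2 <= i)%N ->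
    sbrel [:: lt1 (Sig g i); lt1 (Sig g j)] [:: lt1 (Sig g j); lt1 (Sig g i)]
| r_braid (i j : 'I_n.-1) : val j = (val i).+1 ->
    sbrel [:: lt1 (Sig g i); lt1 (Sig g j); lt1 (Sig g i)]
          [:: lt1 (Sig g j); lt1 (Sig g i); lt1 (Sig g j)]
| r_surf_comm (c : sbgen n g) (k : 'I_g) (j : 'I_n.-1) :
    surfgen c k -> (1 <= val j)%N ->
    sbrel [:: lt1 c; lt1 (Sig g j)] [:: lt1 (Sig g j); lt1 c]
| r_surf_sig1 (c : sbgen n g) (k : 'I_g) (s1 : 'I_n.-1) :
    surfgen c k -> val s1 = 0%N ->
    sbrel [:: lt1 c; lt1 (Sig g s1); lt1 c; lt1 (Sig g s1)]
          [:: lt1 (Sig g s1); lt1 c; lt1 (Sig g s1); lt1 c]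
| r_ab (k : 'I_g) (s1 : 'I_n.-1) : val s1 = 0%N ->
    sbrel [:: lt1 (Ga n k); lt1 (Sig g s1); lt1 (Gb n k)]
          [:: lt1 (Sig g s1); lt1 (Gb n k); lt1 (Sig g s1); lt1 (Ga n k);
              lt1 (Sig g s1)]
| r_mixed (ci cj : sbgen n g) (i j : 'I_g) (s1 : 'I_n.-1) :
    surfgen ci i -> surfgen cj j -> (val j < val i)%N -> val s1 = 0%N ->
    sbrel [:: lt1 ci; lti (Sig g s1); lt1 cj; lt1 (Sig g s1)]
          [:: lti (Sig g s1); lt1 cj; lt1 (Sig g s1); lt1 ci].

(* equality in B_n(Sigma_g): congruence on words generated by free
   cancellation and the defining relations *)
Inductive sbeq (n g : nat) : sbword n g -> sbword n g -> Prop :=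
| e_refl u : sbeq u u
| e_sym u v : sbeq u v -> sbeq v u
| e_trans u v w : sbeq u v -> sbeq v w -> sbeq u w
| e_ctx p q u v : sbeq u v -> sbeq (p ++ u ++ q) (p ++ v ++ q)
| e_cancel (x : sbgen n g) (b : bool) : sbeq [:: (x, b); (x, ~~ b)] [::]
| e_rel u v : sbrel u v -> sbeq u v.

Definition sbGamma n g (i : nat) : sbword n g -> Prop :=
  lcs (@sbeq n g) (@wmul n g) (@winv n g) (@wone n g) i.

Definition qeq3 n g (u v : sbword n g) : Prop :=
  sbGamma 3 (wmul u (winv v)).

(* the image iota_n(B_n) = subgroup generated by sigma_1, ..., sigma_{n-1} *)
Definition braid_image n g : sbword n g -> Prop :=
  gensub (@sbeq n g) (@wmul n g) (@winv n g) (@wone n g)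
         (fun w => exists i : 'I_n.-1, w = [:: lt1 (Sig g i)]).

Definition surj_hom n g (H : group) (lam : sbword n g -> H) : Prop :=
  (forall u v, sbeq u v -> lam u = lam v) /\
  (forall u v, lam (wmul u v) = gmul (lam u) (lam v)) /\
  (forall h : H, exists w, lam w = h).

Definition subgroup_iso_Z (H : group) (P : H -> Prop) : Prop :=
  exists phi : int -> H,
    (forall a b : int, phi (a + b)%R = gmul (phi a) (phi b)) /\
    (forall a b : int, phi a = phi b -> a = b) /\
    (forall h : H, P h <-> exists z, phi z = h).

From Pilot Require Import Defs.
From mathcomp Require Import all_boot.
From mathcomp Require Import ssrint.
From mathcomp Require Import ssralg zify.
From Stdlib Require Import FunctionalExtensionality PropExtensionality ProofIrrelevance ClassicalEpsilon.
Set Implicit Arguments. Unset Strict Implicit. Unset Printing Implicit Defensive.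
Import GRing.Theory.

(* Theorem 10: for n >= 3, a quotient of B = B_n(Sigma_g) in which the braid
   generators sigma_i generate an infinite cyclic group is B / Gamma_3(B),
   compatibly with the generators.  (The argument does not use g >= 1.)

   Call a homomorphism mu out of B sigma-collapsing with value s
   when every sigma_i is sent to the same central element s.
   1. If the target of a surjective mu satisfies
      [sigma_i, sigma_i^-1 sigma_(i+1)] = 1, then mu is sigma-collapsing: the
      braid relation forces sigma_i = sigma_(i+1), and sigma_2 commutes with
      every a_k, b_k.  This applies to lambda (its sigma's lie in a cyclic
      group) and to the projection B -> B/Gamma_3 (sigma_i^-1 sigma_(i+1) is a
      commutator, hence central modulo Gamma_3).
   2. For a sigma-collapsing mu the surface relations reduce to: the a's and
      b's commute, except b_k a_k = a_k b_k s^-2.  So every mu(w) has the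
      normal form prod a_k^(x_k) prod b_k^(y_k) s^z, where the exponent vector
      (x, y, z) = phi w is computed from w alone; if s has infinite order the
      exponents are determined by the element.  The normal form also shows
      that the target is nilpotent of class 2.
   3. Hence lambda u = lambda v -> phi u = phi v -> u = v mod Gamma_3, and
      conversely Gamma_3 lies in the kernel of lambda: any set-theoretic
      section of lambda is the required isomorphism onto B/Gamma_3. *)

Local Notation "x ** y" := (gmul x y) (at level 40, left associativity).

Section GroupTheory.
Variable K : group.
Implicit Types x y z : K.
Local Notation e := (gone K).

Lemma mulgV x : x ** ginv x = e.
Proof.
have -> : x ** ginv x = ginv (x ** ginv x) ** (x ** ginv x) ** (x ** ginv x).
  by rewrite gmulV gmul1.
by rewrite -!gmulA (gmulA (ginv x) x) gmulV gmul1 gmulV.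
Qed.

Lemma mulg1 x : x ** e = x.
Proof. by rewrite -(gmulV x) gmulA mulgV gmul1. Qed.

Lemma mulgI z x y : z ** x = z ** y -> x = y.
Proof. by move=> h; rewrite -(gmul1 x) -(gmul1 y) -(gmulV z) -!gmulA h. Qed.

Lemma mulIg z x y : x ** z = y ** z -> x = y.
Proof. by move=> h; rewrite -(mulg1 x) -(mulg1 y) -(mulgV z) !gmulA h. Qed.

Lemma inv_uniq x y : x ** y = e -> x = ginv y.
Proof. by move=> h; apply: (mulIg (z := y)); rewrite h gmulV. Qed.

Lemma invK x : ginv (ginv x) = x.
Proof. by symmetry; apply: inv_uniq; rewrite mulgV. Qed.

Lemma invM x y : ginv (x ** y) = ginv y ** ginv x.
Proof.
by symmetry; apply: inv_uniq; rewrite -gmulA (gmulA (ginv x)) gmulV gmul1 gmulV.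
Qed.

Lemma inv1 : ginv e = e.
Proof. by symmetry; apply: inv_uniq; rewrite gmul1. Qed.

Lemma mulKg x y : ginv x ** (x ** y) = y.
Proof. by rewrite gmulA gmulV gmul1. Qed.

Lemma mulVKg x y : x ** (ginv x ** y) = y.
Proof. by rewrite gmulA mulgV gmul1. Qed.

Lemma mulgK x y : y ** x ** ginv x = y.
Proof. by rewrite -gmulA mulgV mulg1. Qed.

Lemma mulgVK x y : y ** ginv x ** x = y.
Proof. by rewrite -gmulA gmulV mulg1. Qed.

Definition com x y := x ** y = y ** x.
Definition central z := forall x, com z x.

Lemma com_sym x y : com x y -> com y x. Proof. by []. Qed.
Lemma com_refl x : com x x. Proof. by []. Qed.
Lemma com1 x : com x e. Proof. by rewrite /com gmul1 mulg1. Qed.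

Lemma comM x y z : com x y -> com x z -> com x (y ** z).
Proof. by rewrite /com => h1 h2; rewrite gmulA h1 -gmulA h2 gmulA. Qed.

Lemma comV x y : com x y -> com x (ginv y).
Proof. by rewrite /com => h; apply: (mulIg (z := y)); rewrite mulgVK -gmulA h mulKg. Qed.

Lemma central1 : central e. Proof. by move=> x; apply/com_sym/com1. Qed.

Lemma centralM x y : central x -> central y -> central (x ** y).
Proof. by move=> hx hy z; apply/com_sym/comM; apply: com_sym. Qed.

Lemma centralV x : central x -> central (ginv x).
Proof. by move=> hx z; apply/com_sym/comV; apply: com_sym. Qed.

Definition cm x y := ginv x ** ginv y ** (x ** y).

Lemma cm_eq x y : x ** y = y ** x ** cm x y.
Proof. by rewrite /cm !gmulA mulgK mulgV gmul1. Qed.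

Lemma cm_of_twist x y z : x ** y = y ** x ** z -> cm x y = z.
Proof. by move=> h; apply: (mulgI (z := y ** x)); rewrite -cm_eq h. Qed.

Lemma cm_of_com x y : com x y -> cm x y = e.
Proof. by move=> h; apply: cm_of_twist; rewrite mulg1. Qed.

Lemma com_of_cm x y : cm x y = e -> com x y.
Proof. by move=> h; rewrite /com cm_eq h mulg1. Qed.

(* For fixed x, the y with [x, y] central are closed under products and
   inverses; this propagates class 2 from generators to the whole group. *)
Lemma cm_centralM x y1 y2 : central (cm x y1) -> central (cm x y2) ->
  central (cm x (y1 ** y2)).
Proof.
move=> h1 h2; suff -> : cm x (y1 ** y2) = cm x y2 ** cm x y1 by exact: centralM.
have conj_y1 : ginv y1 ** x ** y1 = x ** cm x y1 by rewrite /cm !gmulA mulgV gmul1.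
transitivity (ginv x ** ginv y2 ** (ginv y1 ** x ** y1) ** y2).
  by rewrite /cm invM !gmulA.
rewrite conj_y1; move: h1; set c1 := cm x y1; clearbody c1 => h1.
by rewrite !gmulA -(gmulA _ c1 y2) (h1 y2) /cm !gmulA.
Qed.

Lemma cm_centralV x y : central (cm x y) -> central (cm x (ginv y)).
Proof.
move=> h; suff -> : cm x (ginv y) = ginv (cm x y) by exact: centralV.
have xy := cm_eq x y; move: h xy; set c := cm x y; clearbody c => h xy.
have yx : y ** x = x ** y ** ginv c by rewrite xy mulgK.
rewrite /cm invK gmulA -(gmulA (ginv x)) yx !gmulA gmulV gmul1.
by rewrite -(gmulA y) (centralV h (ginv y)) gmulA mulgV gmul1.
Qed.

Lemma cm_centralC x y : central (cm x y) -> central (cm y x).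
Proof.
move=> h; suff -> : cm y x = ginv (cm x y) by exact: centralV.
by apply: inv_uniq; rewrite /cm !gmulA mulgK mulgK mulgVK gmulV.
Qed.

Lemma braid_com_eq x y : x ** (y ** x) = y ** (x ** y) ->
  com x (ginv x ** y) -> x = y.
Proof.
set k := ginv x ** y; have -> : y = x ** k by rewrite /k mulVKg.
clearbody k => hb hc.
have lhs : x ** (x ** k ** x) = x ** x ** x ** k.
  by rewrite -(gmulA x k x) -hc !gmulA.
have rhs : x ** k ** (x ** (x ** k)) = x ** x ** x ** k ** k.
  by rewrite !gmulA -(gmulA x k x) -hc !gmulA -(gmulA (x ** x) k x) -hc !gmulA.
rewrite lhs rhs in hb.
have E : (x ** x ** x ** k) ** e = (x ** x ** x ** k) ** k by rewrite mulg1.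
by rewrite -(mulgI E) mulg1.
Qed.

Lemma braid_cm x y : x ** (y ** x) = y ** (x ** y) ->
  ginv x ** y = cm x (ginv (x ** y)).
Proof.
move=> hb; rewrite !gmulA in hb.
apply: (mulgI (z := x)); rewrite mulVKg /cm invK invM !gmulA mulgV gmul1 hb.
by rewrite mulgK mulgK.
Qed.

End GroupTheory.

Section Powers.
Variable K : group.
Implicit Types x y c : K.

Fixpoint gpown x (m : nat) : K := if m is m'.+1 then x ** gpown x m' else gone K.

Definition gpow x (z : int) : K :=
  match z with Posz m => gpown x m | Negz m => gpown (ginv x) m.+1 end.

Lemma int_step_ind (P : int -> Prop) : P 0%R ->
  (forall z, P z -> P (z + 1)%R) -> (forall z, P z -> P (z - 1)%R) ->
  forall z, P z.
Proof.
move=> h0 hS hP; case=> m.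
  elim: m => // m IH; have -> : Posz m.+1 = (Posz m + 1)%R by lia.
  exact: hS.
elim: m => [|m IH].
  have -> : Negz 0 = (0 - 1)%R by lia.
  exact: hP.
have -> : Negz m.+1 = (Negz m - 1)%R by lia.
exact: hP.
Qed.

Lemma gpown_com x m : com x (gpown x m).
Proof. by elim: m => [|m IH] /=; [exact: com1 | exact: comM]. Qed.

Lemma gpowS x z : gpow x (z + 1)%R = gpow x z ** x.
Proof.
case: z => [m|[|m]].
- have -> : (Posz m + 1)%R = Posz m.+1 by lia.
  by rewrite /= (gpown_com x m).
- have -> : (Negz 0 + 1)%R = Posz 0 by lia.
  by rewrite /= mulg1 gmulV.
have -> : (Negz m.+1 + 1)%R = Negz m by lia.
rewrite [gpow x (Negz m.+1)]/= (gpown_com (ginv x) m.+1).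
by rewrite /= -gmulA gmulA mulgVK.
Qed.

Lemma gpowP x z : gpow x (z - 1)%R = gpow x z ** ginv x.
Proof.
have := gpowS x (z - 1)%R; have -> : (z - 1 + 1)%R = z by lia.
by move=> ->; rewrite mulgK.
Qed.

Lemma gpowD x a b : gpow x (a + b)%R = gpow x a ** gpow x b.
Proof.
elim/int_step_ind: b => [|b IH|b IH].
- by rewrite addr0 mulg1.
- by rewrite addrA !gpowS IH gmulA.
- have -> : (a + (b - 1))%R = (a + b - 1)%R by lia.
  by rewrite !gpowP IH gmulA.
Qed.

Lemma gpow_com x y z : com x y -> com (gpow x z) y.
Proof.
move=> h; elim/int_step_ind: z => [|z IH|z IH].
- exact/com_sym/com1.
- by rewrite gpowS; apply/com_sym/comM; apply: com_sym.
- rewrite gpowP; apply/com_sym/comM; first exact: com_sym.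
  exact/comV/com_sym.
Qed.

Lemma gpow_central c z : central c -> central (gpow c z).
Proof. by move=> h y; apply: gpow_com. Qed.

Lemma gpow_gpow x a z : gpow (gpow x a) z = gpow x (a * z)%R.
Proof.
elim/int_step_ind: z => [|z IH|z IH].
- by rewrite mulr0.
- by rewrite gpowS IH -gpowD mulrDr mulr1.
- have -> : (a * (z - 1) = a * z + (- a))%R by rewrite mulrBr mulr1.
  rewrite gpowP IH gpowD; congr (_ ** _).
  by symmetry; apply: inv_uniq; rewrite -gpowD addNr.
Qed.

Lemma gpow_twist x y c z : central c -> y ** x = x ** y ** c ->
  y ** gpow x z = gpow x z ** y ** gpow c z.
Proof.
move=> hc h.
have h1 : ginv x ** y = y ** ginv x ** c.
  apply: (mulIg (z := x)); rewrite -(gmulA _ y x) h !gmulA gmulV gmul1.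
  by rewrite -(gmulA _ c x) (hc x) gmulA mulgVK.
have h' : y ** ginv x = ginv x ** y ** ginv c.
  by apply: (mulIg (z := c)); rewrite mulgVK h1.
elim/int_step_ind: z => [|z IH|z IH].
- by rewrite /= gmul1 !mulg1.
- rewrite !gpowS gmulA IH -!gmulA; congr (_ ** _).
  by rewrite (gpow_central z hc x) gmulA h -!gmulA (hc (gpow c z)).
- rewrite !gpowP gmulA IH -!gmulA; congr (_ ** _).
  by rewrite (gpow_central z hc (ginv x)) gmulA h' -!gmulA (centralV hc (gpow c z)).
Qed.

Lemma gpow_morph (ph : int -> K) a z :
  (forall a b, ph (a + b)%R = ph a ** ph b) -> gpow (ph a) z = ph (a * z)%R.
Proof.
move=> phD; have ph0 : ph 0%R = gone K.
  by symmetry; apply: (mulgI (z := ph 0%R)); rewrite mulg1 -phD addr0.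
elim/int_step_ind: z => [|z IH|z IH].
- by rewrite mulr0 ph0.
- by rewrite gpowS IH -phD mulrDr mulr1.
rewrite gpowP IH.
have -> : ginv (ph a) = ph (- a)%R by symmetry; apply: inv_uniq; rewrite -phD addNr.
by rewrite -phD mulrBr mulr1.
Qed.

End Powers.

Section Words.
Variables n g : nat.
Local Notation W := (sbword n g).
Local Notation sbeq := (@sbeq n g).
Local Notation Gamma := (@sbGamma n g).
Local Notation gen := (gensub sbeq (@wmul n g) (@winv n g) (@wone n g)).
Implicit Types u v w p : W.

Lemma winv_cat u v : winv (u ++ v) = winv v ++ winv u.
Proof. by rewrite /winv map_cat rev_cat. Qed.

Lemma winvK u : winv (winv u) = u.
Proof.
rewrite /winv map_rev revK -map_comp -[RHS]map_id.
by apply: eq_map => -[x b] /=; rewrite negbK.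
Qed.

Lemma sbeq_cat u u' v v' : sbeq u u' -> sbeq v v' -> sbeq (u ++ v) (u' ++ v').
Proof.
move=> hu hv; apply: (e_trans (v := u' ++ v)); first exact: (e_ctx [::] v hu).
by have := e_ctx u' [::] hv; rewrite !cats0.
Qed.

Lemma sbeq_cancel u : sbeq (u ++ winv u) [::].
Proof.
elim: u => [|[x b] u IH] /=; first exact: e_refl.
rewrite /winv /= rev_cons -cats1 -/(winv u).
apply: (e_trans (v := [:: (x, b); (x, ~~ b)])); last exact: e_cancel.
by have := e_ctx [:: (x, b)] [:: (x, ~~ b)] IH; rewrite /= -!catA.
Qed.

Lemma sbeq_cancelV u : sbeq (winv u ++ u) [::].
Proof. by have := sbeq_cancel (winv u); rewrite winvK. Qed.

Lemma sbeq_drop a b p : sbeq (a ++ winv p ++ p ++ b) (a ++ b).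
Proof. by have := e_ctx a b (sbeq_cancelV p); rewrite -catA. Qed.

Lemma gensub_conj (S : W -> Prop) :
  (forall p x, S x -> gen S (p ++ x ++ winv p)) ->
  forall p w, gen S w -> gen S (p ++ w ++ winv p).
Proof.
move=> hS p w; elim=> {w} [x Sx| |x y _ IHx _ IHy|x _ IH|x y hxy _ IH].
- exact: hS.
- exact: gs_eq (e_sym (sbeq_cancel p)) (gs_one _ _ _ _ _).
- apply: gs_eq (gs_mul IHx IHy); rewrite /wmul.
  by have := sbeq_drop (p ++ x) (y ++ winv p) p; rewrite -!catA.
- by have := gs_inv IH; rewrite /winv -/(winv _) !winv_cat winvK -!catA.
- by apply: gs_eq IH; apply: sbeq_cat (e_refl _) (sbeq_cat hxy (e_refl _)).
Qed.

Definition wcomm u v : W := commut (@wmul n g) (@winv n g) u v.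

Lemma wcomm_conj p u v :
  sbeq (wcomm (p ++ u ++ winv p) (p ++ v ++ winv p)) (p ++ wcomm u v ++ winv p).
Proof.
rewrite /wcomm /commut /wmul !winv_cat !winvK -!catA.
have h1 := sbeq_drop (p ++ winv u)
  (winv v ++ winv p ++ p ++ u ++ winv p ++ p ++ v ++ winv p) p.
have h2 := sbeq_drop (p ++ winv u ++ winv v) (u ++ winv p ++ p ++ v ++ winv p) p.
have h3 := sbeq_drop (p ++ winv u ++ winv v ++ u) (v ++ winv p) p.
rewrite -!catA in h1 h2 h3.
exact: e_trans h1 (e_trans h2 h3).
Qed.

Lemma Gamma_sbeq i u v : sbeq u v -> Gamma i u -> Gamma i v.
Proof. by rewrite /sbGamma; case: i => [|[|i]] //= huv; apply: gs_eq. Qed.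

Lemma Gamma_nil i : Gamma i [::].
Proof. by rewrite /sbGamma; case: i => [|[|i]] //=; apply: gs_one. Qed.

Lemma Gamma_cat i u v : Gamma i u -> Gamma i v -> Gamma i (u ++ v).
Proof. by rewrite /sbGamma; case: i => [|[|i]] //=; apply: gs_mul. Qed.

Lemma Gamma_inv i u : Gamma i u -> Gamma i (winv u).
Proof. by rewrite /sbGamma; case: i => [|[|i]] //=; apply: gs_inv. Qed.

Lemma Gamma_normal i p w : Gamma i w -> Gamma i (p ++ w ++ winv p).
Proof.
elim: i p w => [|[|i] IH] //; rewrite /sbGamma /= -/(sbGamma i.+1).
apply: gensub_conj => p _ [x [k [hk ->]]].
apply: (gs_eq (wcomm_conj p x k)); apply: gs_gen.
by exists (p ++ x ++ winv p), (p ++ k ++ winv p); split => //; apply: IH.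
Qed.

Definition modG i u v := Gamma i (u ++ winv v).

Lemma modG_sbeq i u v : sbeq u v -> modG i u v.
Proof.
move=> h; apply: Gamma_sbeq (Gamma_nil i); apply: e_sym.
exact: e_trans (sbeq_cat h (e_refl _)) (sbeq_cancel v).
Qed.

Lemma modG_refl i u : modG i u u.
Proof. exact/modG_sbeq/e_refl. Qed.

Lemma modG_sym i u v : modG i u v -> modG i v u.
Proof. by move=> /Gamma_inv; rewrite /modG winv_cat winvK. Qed.

Lemma modG_trans i u v w : modG i u v -> modG i v w -> modG i u w.
Proof.
move=> h1 h2; have := Gamma_cat h1 h2; rewrite -!catA.
exact/Gamma_sbeq/sbeq_drop.
Qed.

Lemma modG_mul i a b c d : modG i a b -> modG i c d -> modG i (a ++ c) (b ++ d).
Proof.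
move=> h1 /(Gamma_normal b) h2; have := Gamma_cat h1 h2; rewrite -!catA.
by rewrite /modG winv_cat -!catA; apply/Gamma_sbeq/sbeq_drop.
Qed.

Lemma modG_inv i a b : modG i a b -> modG i (winv a) (winv b).
Proof.
move=> /(Gamma_normal (winv b)); rewrite winvK -catA => h.
have := sbeq_drop (winv b ++ a) [::] b; rewrite -!catA !cats0 => hd.
by have := Gamma_inv (Gamma_sbeq hd h); rewrite /modG !winv_cat !winvK.
Qed.

Lemma modG_assoc i u v w : modG i (u ++ (v ++ w)) ((u ++ v) ++ w).
Proof. by rewrite catA; apply: modG_refl. Qed.

Lemma modG_nil i u : modG i ([::] ++ u) u.
Proof. exact: modG_refl. Qed.

Lemma modG_invl i u : modG i (winv u ++ u) [::].
Proof. exact/modG_sbeq/sbeq_cancelV. Qed.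

End Words.

(* The quotient of a type by a congruence for group operations satisfying the
   group axioms up to that congruence is a group; elements are equivalence
   classes, represented as predicates. *)
Section Quotient.
Variables (T : Type) (R : T -> T -> Prop) (mul : T -> T -> T) (inv : T -> T) (one : T).
Hypotheses (Rrefl : forall x, R x x) (Rsym : forall x y, R x y -> R y x)
  (Rtrans : forall x y z, R x y -> R y z -> R x z)
  (Rmul : forall a b c d, R a b -> R c d -> R (mul a c) (mul b d))
  (Rinv : forall a b, R a b -> R (inv a) (inv b))
  (mulA : forall x y z, R (mul x (mul y z)) (mul (mul x y) z))
  (mul1 : forall x, R (mul one x) x) (mulV : forall x, R (mul (inv x) x) one).

Definition qclass := {P : T -> Prop | exists w, P = R w}.
Definition qcls (w : T) : qclass := exist _ (R w) (ex_intro _ w erefl).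
Definition qrep (q : qclass) : T :=
  proj1_sig (constructive_indefinite_description _ (proj2_sig q)).

Lemma qclass_eq (a b : qclass) : proj1_sig a = proj1_sig b -> a = b.
Proof.
case: a b => P p [P' p'] /= E; subst P'.
by rewrite (proof_irrelevance _ p p').
Qed.

Lemma qcls_eq u v : R u v -> qcls u = qcls v.
Proof.
move=> h; apply: qclass_eq; apply: functional_extensionality => x.
by apply: propositional_extensionality; split => h'; [apply: Rtrans (Rsym h) h' | apply: Rtrans h h'].
Qed.

Lemma qcls_inj u v : qcls u = qcls v -> R u v.
Proof. by move=> /(congr1 (@proj1_sig _ _)) /= ->. Qed.

Lemma qrepK q : qcls (qrep q) = q.
Proof.
apply: qclass_eq; rewrite /qrep.
by case: (constructive_indefinite_description _ _) => w /= ->.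
Qed.

Lemma qcls_surj (q : qclass) : exists u, q = qcls u.
Proof. by exists (qrep q); rewrite qrepK. Qed.

Definition qmul (a b : qclass) : qclass := qcls (mul (qrep a) (qrep b)).
Definition qinv (a : qclass) : qclass := qcls (inv (qrep a)).
Definition qone : qclass := qcls one.

Lemma qmulE u v : qmul (qcls u) (qcls v) = qcls (mul u v).
Proof. by apply/qcls_eq/Rmul; apply/qcls_inj/qrepK. Qed.

Lemma qinvE u : qinv (qcls u) = qcls (inv u).
Proof. by apply/qcls_eq/Rinv; apply/qcls_inj/qrepK. Qed.

Lemma qmulA a b c : qmul a (qmul b c) = qmul (qmul a b) c.
Proof.
have [u ->] := qcls_surj a; have [v ->] := qcls_surj b; have [w ->] := qcls_surj c.
by rewrite !qmulE; apply/qcls_eq/mulA.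
Qed.

Lemma qmul1 a : qmul qone a = a.
Proof. by have [u ->] := qcls_surj a; rewrite qmulE; apply/qcls_eq/mul1. Qed.

Lemma qmulV a : qmul (qinv a) a = qone.
Proof. by have [u ->] := qcls_surj a; rewrite qinvE qmulE; apply/qcls_eq/mulV. Qed.

Definition quotient_group : group := @Defs.Group qclass qmul qinv qone qmulA qmul1 qmulV.

End Quotient.

Section GammaQuotient.
Variables n g i : nat.
Local Notation W := (sbword n g).

Definition quotG : group := quotient_group (@modG_refl n g i) (@modG_sym n g i)
  (@modG_trans n g i) (@modG_mul n g i) (@modG_inv n g i) (@modG_assoc n g i)
  (@modG_nil n g i) (@modG_invl n g i).

Definition clsG (w : W) : quotG := qcls (@modG n g i) w.

Lemma clsG_mul u v : clsG (u ++ v) = clsG u ** clsG v.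
Proof. by symmetry; apply: qmulE; [apply: modG_refl|apply: modG_sym|apply: modG_trans|apply: modG_mul]. Qed.

Lemma clsG_eq u v : sbeq u v -> clsG u = clsG v.
Proof. by move=> h; apply: qcls_eq; [apply: modG_sym|apply: modG_trans|apply: modG_sbeq]. Qed.

Lemma clsG_inj u v : clsG u = clsG v -> modG i u v.
Proof. by apply: qcls_inj; apply: modG_refl. Qed.

Lemma clsG_surj (q : quotG) : exists u, clsG u = q.
Proof. by have [u ->] := qcls_surj q; exists u. Qed.

End GammaQuotient.

Section WordHom.
Variables (n g : nat) (K : group) (lam : sbword n g -> K).
Hypotheses (lam_eq : forall u v, sbeq u v -> lam u = lam v)
  (lam_mul : forall u v, lam (u ++ v) = lam u ** lam v).
Implicit Types u v w : sbword n g.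

Definition lc (c : sbgen n g) := lam [:: lt1 c].
Definition lS (i : 'I_n.-1) := lc (Sig g i).

Lemma lam_nil : lam [::] = gone K.
Proof. by apply: (mulgI (z := lam [::])); rewrite -lam_mul mulg1. Qed.

Lemma lam_letters w : lam w = foldr (fun l h => lam [:: l] ** h) (gone K) w.
Proof. by elim: w => [|l w IH] /=; [exact: lam_nil | rewrite -IH -lam_mul]. Qed.

Lemma lam_winv w : lam (winv w) = ginv (lam w).
Proof. by apply: inv_uniq; rewrite -lam_mul -lam_nil; apply/lam_eq/sbeq_cancelV. Qed.

Lemma lam_letter_inv c : lam [:: (c, true)] = ginv (lc c).
Proof. exact: (lam_winv [:: lt1 c]). Qed.

Lemma lam_wcomm u v : lam (wcomm u v) = cm (lam u) (lam v).
Proof. by rewrite /wcomm /commut /wmul !lam_mul !lam_winv. Qed.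

Lemma lam_ind (P : K -> Prop) : P (gone K) -> (forall c, P (lc c)) ->
  (forall a b, P a -> P b -> P (a ** b)) -> (forall a, P a -> P (ginv a)) ->
  forall w, P (lam w).
Proof.
move=> h1 hc hM hV; elim=> [|[c b] w IH]; first by rewrite lam_nil.
rewrite -cat1s lam_mul; apply: hM => //; case: b; last exact: hc.
by rewrite lam_letter_inv; apply/hV/hc.
Qed.

Lemma lam_gensub (S : sbword n g -> Prop) (P : K -> Prop) :
  (forall x, S x -> P (lam x)) -> P (gone K) ->
  (forall a b, P a -> P b -> P (a ** b)) -> (forall a, P a -> P (ginv a)) ->
  forall w, gensub (@sbeq n g) (@wmul n g) (@winv n g) (@wone n g) S w -> P (lam w).
Proof.
move=> hS h1 hM hV w; elim=> {w} [x Sx| |x y _ IHx _ IHy|x _ IH|x y hxy _ IH].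
- exact: hS.
- by rewrite /wone lam_nil.
- by rewrite /wmul lam_mul; apply: hM.
- by rewrite lam_winv; apply: hV.
- by rewrite -(lam_eq hxy).
Qed.

Lemma cm_central_letters x : (forall c, central (cm x (lc c))) ->
  forall w, central (cm x (lam w)).
Proof.
move=> hc; apply: (lam_ind (P := fun h => central (cm x h))) => //.
- by rewrite cm_of_com; [exact: central1 | exact: com1].
- exact: cm_centralM.
- exact: cm_centralV.
Qed.

Lemma class2_of_letters : (forall c1 c2, central (cm (lc c1) (lc c2))) ->
  forall u v, central (cm (lam u) (lam v)).
Proof.
move=> hc u v; apply: cm_centralC; apply: cm_central_letters => c.
by apply: cm_centralC; apply: cm_central_letters.
Qed.

Lemma class2_Gamma3_kernel : (forall u v, central (cm (lam u) (lam v))) ->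
  forall w, sbGamma 3 w -> lam w = gone K.
Proof.
move=> hc; apply: (lam_gensub (P := fun h => h = gone K)) => //.
- move=> _ [x [k [hk ->]]]; rewrite -/(wcomm x k) lam_wcomm.
  have hk_central : central (lam k).
    apply: (lam_gensub (P := @central K)) hk; last 3 first.
    + exact: central1.
    + exact: centralM.
    + exact: centralV.
    by move=> _ [x' [k' [_ ->]]]; rewrite -/(wcomm x' k') lam_wcomm.
  exact/cm_of_com/com_sym/hk_central.
- by move=> a b -> ->; rewrite gmul1.
- by move=> a ->; rewrite inv1.
Qed.

Lemma lam_braid (i j : 'I_n.-1) : val j = (val i).+1 ->
  lS i ** (lS j ** lS i) = lS j ** (lS i ** lS j).
Proof.
move=> h; have := lam_eq (e_rel (r_braid g h)).
by rewrite !lam_letters /= !mulg1.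
Qed.

Lemma lam_surf_comm c k (j : 'I_n.-1) : surfgen c k -> (1 <= val j)%N ->
  com (lc c) (lS j).
Proof.
move=> h1 h2; have := lam_eq (e_rel (r_surf_comm h1 h2)).
by rewrite !lam_letters /= !mulg1.
Qed.

Lemma lam_ab k (s1 : 'I_n.-1) : val s1 = 0%N ->
  lc (Ga n k) ** (lS s1 ** lc (Gb n k)) =
  lS s1 ** (lc (Gb n k) ** (lS s1 ** (lc (Ga n k) ** lS s1))).
Proof.
move=> h; have := lam_eq (e_rel (r_ab k h)).
by rewrite !lam_letters /= !mulg1.
Qed.

Lemma lam_mixed ci cj i j (s1 : 'I_n.-1) :
  surfgen ci i -> surfgen cj j -> (val j < val i)%N -> val s1 = 0%N ->
  lc ci ** (ginv (lS s1) ** (lc cj ** lS s1)) =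
  ginv (lS s1) ** (lc cj ** (lS s1 ** lc ci)).
Proof.
move=> h1 h2 h3 h4; have := lam_eq (e_rel (r_mixed h1 h2 h3 h4)).
by rewrite !lam_letters /= !mulg1 /lti lam_letter_inv.
Qed.

End WordHom.

Section Collapse.
Variables (n g : nat) (K : group) (lam : sbword n g -> K).
Hypotheses (lam_eq : forall u v, sbeq u v -> lam u = lam v)
  (lam_mul : forall u v, lam (u ++ v) = lam u ** lam v).

Definition sigma_collapse (s : K) := (forall i, lS lam i = s) /\ central s.

Lemma sigma_collapse_of_braid : (2 < n)%N -> (forall h, exists w, lam w = h) ->
  (forall i j : 'I_n.-1, val j = (val i).+1 ->
     com (lS lam i) (ginv (lS lam i) ** lS lam j)) ->
  exists s, sigma_collapse s.
Proof.
move=> hn lam_surj hbr.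
have hn0 : (0 < n.-1)%N by lia.
have hn1 : (1 < n.-1)%N by lia.
pose s := lS lam (Ordinal hn0).
have sig_s : forall i, lS lam i = s.
  case=> m; elim: m => [|m IH] hm; first by congr (lS lam _); apply: val_inj.
  have hm' : (m < n.-1)%N by apply: ltnW.
  rewrite -(IH hm'); symmetry; apply: braid_com_eq.
  - exact: (lam_braid lam_eq lam_mul (i := Ordinal hm') (j := Ordinal hm)).
  - exact: (hbr (Ordinal hm') (Ordinal hm)).
have com_letter : forall c, com s (lc lam c).
  rewrite -(sig_s (Ordinal hn1)).
  case=> [i|k|k]; first by rewrite -/(lS lam i) !sig_s.
  - by apply/com_sym/(lam_surf_comm lam_eq lam_mul (k := k)); [left|].
  - by apply/com_sym/(lam_surf_comm lam_eq lam_mul (k := k)); [right|].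
exists s; split => // h; have [w <-] := lam_surj h.
apply: (lam_ind lam_eq lam_mul (P := com s)) => //; [exact: com1 | exact: comM | exact: comV].
Qed.

End Collapse.

Section Products.
Variables (K : group) (I : eqType) (f : I -> K).

Definition addx (x : I -> int) (j : I) (d : int) : I -> int :=
  fun k => if k == j then (x k + d)%R else x k.

Definition Prod (r : seq I) (x : I -> int) : K :=
  foldr (fun k h => gpow (f k) (x k) ** h) (gone K) r.

Lemma Prod_ext r x x' : (forall k, k \in r -> x k = x' k) -> Prod r x = Prod r x'.
Proof.
elim: r => [|k r IH] //= h; rewrite h ?mem_head // IH // => k' hk.
by apply: h; rewrite in_cons hk orbT.
Qed.

Lemma Prod0 r : Prod r (fun _ => 0%R) = gone K.
Proof. by elim: r => [|k r IH] //=; rewrite IH gmul1. Qed.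

Lemma Prod_com r x y : (forall k, k \in r -> com y (f k)) -> com y (Prod r x).
Proof.
elim: r => [|k r IH] /= h; first exact: com1.
apply: comM; first by apply/com_sym/gpow_com/com_sym/h; rewrite mem_head.
by apply: IH => k' hk; apply: h; rewrite in_cons hk orbT.
Qed.

Lemma Prod_add r x j : j \in r -> uniq r ->
  (forall k, k \in r -> com (f j) (f k)) -> f j ** Prod r x = Prod r (addx x j 1).
Proof.
elim: r => [|k r IH] //= hj /andP [hk hu] hc.
case: (eqVneq k j) => [E|ne].
- subst k; rewrite /addx eqxx gpowS gmulA -(gpow_com (x j) (com_refl (f j))).
  congr (_ ** _); apply: Prod_ext => k' hk'; rewrite /addx; case: eqP => // E.
  by subst k'; rewrite hk' in hk.
- have hjr : j \in r by move: hj; rewrite in_cons eq_sym (negbTE ne).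
  rewrite gmulA -(gpow_com (x k) (com_sym (hc k (mem_head _ _)))) -gmulA IH //.
  + by rewrite /addx (negbTE ne).
  + by move=> k' hk'; apply: hc; rewrite in_cons hk' orbT.
Qed.

Lemma Prod_twist r x j y c : j \in r -> uniq r ->
  (forall k, k \in r -> k != j -> com y (f k)) -> central c ->
  y ** f j = f j ** y ** c -> y ** Prod r x = Prod r x ** y ** gpow c (x j).
Proof.
elim: r => [|k r IH] //= hj /andP [hk hu] hc hcc hyj.
case: (eqVneq k j) => [E|ne].
- subst k.
  have hcr : com y (Prod r x).
    apply: Prod_com => k' hk'; apply: hc; first by rewrite in_cons hk' orbT.
    by apply/eqP => E; subst k'; rewrite hk' in hk.
  rewrite gmulA (gpow_twist (x j) hcc hyj) -!gmulA; congr (_ ** _).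
  by rewrite (gpow_central (x j) hcc) gmulA hcr -gmulA.
- have hjr : j \in r by move: hj; rewrite in_cons eq_sym (negbTE ne).
  rewrite gmulA -(gpow_com (x k) (com_sym (hc k (mem_head _ _) ne))) -gmulA IH //.
  + by rewrite !gmulA.
  + by move=> k' hk' ne'; apply: hc => //; rewrite in_cons hk' orbT.
Qed.

End Products.

(* Normal-form coordinates (x, y, z) in Z^g x Z^g x Z of a word, standing for
   prod_k a_k^(x_k) prod_k b_k^(y_k) s^z, computed letter by letter. *)
Section Coordinates.
Variables n g : nat.

Definition coords := (('I_g -> int) * ('I_g -> int) * int)%type.

Definition origin : coords := (fun _ => 0%R, fun _ => 0%R, 0%R).

(* left multiplication by a letter; b_j jumps over a_j^(x_j) at cost s^(-2 x_j) *)
Definition act (l : sbgen n g * bool) (m : coords) : coords :=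
  let: (x, y, z) := m in
  match l with
  | (Sig _, false) => (x, y, (z + 1)%R)
  | (Sig _, true) => (x, y, (z - 1)%R)
  | (Ga j, false) => (addx x j 1, y, z)
  | (Ga j, true) => (addx x j (-1), y, z)
  | (Gb j, false) => (x, addx y j 1, (-2 * x j + z)%R)
  | (Gb j, true) => (x, addx y j (-1), (2 * x j + z)%R)
  end.

Definition phi (w : sbword n g) : coords := foldr act origin w.

Lemma act_inv (c : sbgen n g) m : act (c, false) (act (c, true) m) = m.
Proof.
have addxK (x : 'I_g -> int) j : addx (addx x j (-1)) j 1 = x.
  by apply: functional_extensionality => k; rewrite /addx; case: eqP => // _; lia.
case: m => [[x y] z]; case: c => [i|j|j] /=; rewrite ?addxK //; congr (_, _); lia.
Qed.

End Coordinates.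

Section NormalForm.
Variables (n g : nat) (K : group) (lam : sbword n g -> K).
Hypotheses (lam_eq : forall u v, sbeq u v -> lam u = lam v)
  (lam_mul : forall u v, lam (u ++ v) = lam u ** lam v).
Variables (s : K) (i0 : 'I_n.-1).
Hypotheses (hcol : sigma_collapse lam s) (hi0 : val i0 = 0%N).

Let hsig : forall i, lS lam i = s := proj1 hcol.
Let hcent : central s := proj2 hcol.

Local Notation gA k := (lc lam (Ga n k)).
Local Notation gB k := (lc lam (Gb n k)).

Lemma collapse_BA k : gB k ** gA k = gA k ** gB k ** gpow s (-2)%R.
Proof.
have := lam_ab lam_eq lam_mul k hi0; rewrite !hsig -(hcent (gA k)).
have swap X Y : X ** (s ** Y) = s ** (X ** Y) by rewrite gmulA -(hcent X) -gmulA.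
have cancel_s Y : s ** Y ** ginv s = Y by rewrite (hcent Y) mulgK.
by rewrite !swap => /mulgI ->; rewrite /= mulg1 (gmulA _ (ginv s)) !cancel_s.
Qed.

Lemma collapse_AB k : gA k ** gB k = gB k ** gA k ** gpow s 2%R.
Proof. by rewrite collapse_BA -gmulA -gpowD mulg1. Qed.

Lemma collapse_com_surf ci cj i j : surfgen ci i -> surfgen cj j -> i != j ->
  com (lc lam ci) (lc lam cj).
Proof.
wlog lt_ji : ci cj i j / (val j < val i)%N.
  move=> hwlog hi hj ne; case: (ltngtP (val i) (val j)) => h.
  - by apply/com_sym/(hwlog cj ci j i) => //; rewrite eq_sym.
  - exact: (hwlog ci cj i j).
  - by move: ne; rewrite (val_inj h) eqxx.
move=> hi hj _; have := lam_mixed lam_eq lam_mul hi hj lt_ji hi0; rewrite !hsig.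
rewrite -(hcent (lc lam cj)) (gmulA (ginv s)) gmulV gmul1.
by rewrite (gmulA (lc lam cj) s) -(hcent (lc lam cj)) -gmulA (gmulA (ginv s)) gmulV gmul1.
Qed.

Lemma comAA i j : com (gA i) (gA j).
Proof.
case: (eqVneq i j) => [->|ne]; first exact: com_refl.
by apply: (collapse_com_surf (i := i) (j := j)) => //; left.
Qed.

Lemma comBB i j : com (gB i) (gB j).
Proof.
case: (eqVneq i j) => [->|ne]; first exact: com_refl.
by apply: (collapse_com_surf (i := i) (j := j)) => //; right.
Qed.

Lemma comAB i j : i != j -> com (gA i) (gB j).
Proof. by move=> ne; apply: (collapse_com_surf (i := i) (j := j)) => //; [left|right]. Qed.

Local Notation r := (enum 'I_g).

Definition Psi (m : coords g) : K := Prod (fun k => gA k) r m.1.1 ** Prod (fun k => gB k) r m.1.2 ** gpow s m.2.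

Lemma ProdA_add j x : gA j ** Prod (fun k => gA k) r x = Prod (fun k => gA k) r (addx x j 1).
Proof. by apply: Prod_add; rewrite ?mem_enum ?enum_uniq // => k _; apply: comAA. Qed.

Lemma ProdB_add j y : gB j ** Prod (fun k => gB k) r y = Prod (fun k => gB k) r (addx y j 1).
Proof. by apply: Prod_add; rewrite ?mem_enum ?enum_uniq // => k _; apply: comBB. Qed.

Lemma ProdA_twistB j x : gB j ** Prod (fun k => gA k) r x =
  Prod (fun k => gA k) r x ** gB j ** gpow s (-2 * x j)%R.
Proof.
rewrite -gpow_gpow; apply: Prod_twist; rewrite ?mem_enum ?enum_uniq //.
- by move=> k _ ne; apply/com_sym/comAB.
- exact: gpow_central.
- exact: collapse_BA.
Qed.

Lemma ProdB_twistA j y : gA j ** Prod (fun k => gB k) r y =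
  Prod (fun k => gB k) r y ** gA j ** gpow s (2 * y j)%R.
Proof.
rewrite -gpow_gpow; apply: Prod_twist; rewrite ?mem_enum ?enum_uniq //.
- by move=> k _ ne; apply: comAB; rewrite eq_sym.
- exact: gpow_central.
- exact: collapse_AB.
Qed.

Lemma Psi_act_pos c m : lam [:: (c, false)] ** Psi m = Psi (act (c, false) m).
Proof.
case: m => [[x y] z]; rewrite /Psi; case: c => [i|j|j] /=.
- have -> : lam [:: (Sig g i, false)] = s by exact: hsig i.
  by rewrite hcent gpowS !gmulA.
- by rewrite !gmulA ProdA_add.
- rewrite !gmulA ProdA_twistB -(gmulA _ (gpow _ _) (Prod _ r y)).
  by rewrite (gpow_central _ hcent) gmulA -(gmulA _ (gB j)) ProdB_add -gmulA -gpowD.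
Qed.

Lemma Psi_act l m : lam [:: l] ** Psi m = Psi (act l m).
Proof.
case: l => c [|]; last exact: Psi_act_pos.
rewrite lam_letter_inv //; apply: (mulgI (z := lam [:: (c, false)])).
by rewrite mulVKg Psi_act_pos act_inv.
Qed.

Lemma normal_form w : lam w = Psi (phi w).
Proof.
rewrite lam_letters //; elim: w => [|l w IH] /=.
  by rewrite /Psi /= !Prod0 !gmul1.
by rewrite IH Psi_act.
Qed.

(* Commuting a_j or b_j past an element in normal form produces a power of s
   that reads off its coordinates y_j and x_j. *)
Lemma Psi_twistB j m : gB j ** Psi m = Psi m ** gB j ** gpow s (-2 * m.1.1 j)%R.
Proof.
case: m => [[x y] z]; rewrite /Psi /= !gmulA ProdA_twistB.
rewrite -(gmulA _ (gpow _ _) (Prod _ r y)) (gpow_central _ hcent) gmulA.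
rewrite -(gmulA _ (gB j)) (Prod_com y (y := gB j)); last by move=> k _; exact: comBB.
rewrite -!gmulA (gpow_central _ hcent); congr (_ ** (_ ** _)).
by rewrite !gmulA (gpow_central _ hcent (gB j)).
Qed.

Lemma Psi_twistA j m : gA j ** Psi m = Psi m ** gA j ** gpow s (2 * m.1.2 j)%R.
Proof.
case: m => [[x y] z]; rewrite /Psi /= !gmulA.
rewrite (Prod_com x (y := gA j)); last by move=> k _; exact: comAA.
rewrite -(gmulA _ (gA j)) ProdB_twistA !gmulA.
rewrite -!gmulA (gpow_central _ hcent); congr (_ ** (_ ** _)).
by rewrite !gmulA (gpow_central _ hcent (gA j)).
Qed.

Lemma collapse_class2 u v : central (cm (lam u) (lam v)).
Proof.
apply: class2_of_letters => // c1 c2.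
have trivial_or_s c : forall d, com (lc lam c) (lc lam d) -> central (cm (lc lam c) (lc lam d)).
  by move=> d /cm_of_com ->; exact: central1.
case: c1 => [i|i|i].
- by apply: trivial_or_s; rewrite -/(lS lam i) hsig.
- case: c2 => [j|j|j].
  + by apply/trivial_or_s/com_sym; rewrite -/(lS lam j) hsig.
  + exact/trivial_or_s/comAA.
  + case: (eqVneq i j) => [->|ne]; last exact/trivial_or_s/comAB.
    by rewrite (cm_of_twist (collapse_AB j)); exact: gpow_central.
- case: c2 => [j|j|j].
  + by apply/trivial_or_s/com_sym; rewrite -/(lS lam j) hsig.
  + case: (eqVneq i j) => [->|ne]; last by apply/trivial_or_s/com_sym/comAB; rewrite eq_sym.
    by rewrite (cm_of_twist (collapse_BA j)); exact: gpow_central.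
  + exact/trivial_or_s/comBB.
Qed.

Hypothesis s_inj : injective (gpow s).

Lemma Psi_inj : injective Psi.
Proof.
move=> m m' E.
have hx : m.1.1 = m'.1.1.
  apply: functional_extensionality => j; have := Psi_twistB j m.
  rewrite E Psi_twistB => /mulgI /s_inj; lia.
have hy : m.1.2 = m'.1.2.
  apply: functional_extensionality => j; have := Psi_twistA j m.
  rewrite E Psi_twistA => /mulgI /s_inj; lia.
move: E; case: m m' hx hy => [[x y] z] [[x' y'] z'] /= -> -> /mulgI.
by move=> /s_inj /= ->.
Qed.

End NormalForm.

Section QuotientGamma3.
Variables n g : nat.

Lemma quotG3_class2 (a b : quotG n g 3) : central (cm a b).
Proof.
have cls_wcomm := lam_wcomm (@clsG_eq n g 3) (@clsG_mul n g 3).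
have [u <-] := clsG_surj a; have [v <-] := clsG_surj b; move=> h.
have [t <-] := clsG_surj h; apply/com_sym/com_of_cm.
rewrite -cls_wcomm -cls_wcomm; apply: (qcls_eq (@modG_sym n g 3) (@modG_trans n g 3)).
rewrite /modG /= cats0; apply: gs_gen; exists t, (wcomm u v); split => //.
by apply: gs_gen; exists u, v.
Qed.

Lemma quotG3_collapse : (2 < n)%N -> exists t, sigma_collapse (@clsG n g 3) t.
Proof.
move=> hn; apply: sigma_collapse_of_braid (@clsG_eq n g 3) (@clsG_mul n g 3) hn _ _.
  exact: clsG_surj.
move=> i j hij; rewrite (braid_cm (lam_braid (@clsG_eq n g 3) (@clsG_mul n g 3) hij)).
exact/com_sym/quotG3_class2.
Qed.

End QuotientGamma3.

Lemma Zimage_collapse n g (H : group) (lam : sbword n g -> H) : (2 < n)%N ->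
  surj_hom lam -> subgroup_iso_Z (fun h => exists w, braid_image w /\ lam w = h) ->
  exists s, sigma_collapse lam s /\ injective (gpow s).
Proof.
move=> hn [lam_eq [lam_mul lam_surj]] [ph [phD [ph_inj phP]]].
have hn0 : (0 < n.-1)%N by lia.
have ph0 : ph 0%R = gone H.
  by symmetry; apply: (mulgI (z := ph 0%R)); rewrite mulg1 -phD addr0.
have sig_in_Z i : exists z, ph z = lS lam i.
  by apply/(phP _).1; exists [:: lt1 (Sig g i)]; split => //; apply: gs_gen; exists i.
have [s col] : exists s, sigma_collapse lam s.
  apply: sigma_collapse_of_braid lam_eq lam_mul hn lam_surj _ => i j _.
  apply: comM; first exact/comV/com_refl.
  have [a <-] := sig_in_Z i; have [b <-] := sig_in_Z j.
  by rewrite /com -!phD addrC.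
exists s; split => //.
have [z0 hz0] := sig_in_Z (Ordinal hn0); rewrite col.1 in hz0.
have z0_neq0 : z0 != 0%R.
  apply/eqP => z0_eq0; move: hz0; rewrite z0_eq0 ph0 => s1.
  have braid_trivial w : braid_image w -> lam w = gone H.
    apply: (lam_gensub lam_eq lam_mul (P := fun h => h = gone H)) => //.
    - by move=> _ [i ->]; rewrite s1 -(col.1 i).
    - by move=> a b -> ->; rewrite gmul1.
    - by move=> a ->; rewrite inv1.
  have [w [bw hw]] : exists w, braid_image w /\ lam w = ph 1%R by apply/(phP _).2; exists 1%R.
  by have := ph_inj 1%R 0%R; rewrite -hw braid_trivial // ph0 => /(_ erefl).
by move=> a b; rewrite -hz0 !gpow_morph // => /ph_inj /(mulfI z0_neq0).
Qed.

Theorem mainTheorem10 (g n : nat) (hg : (1 <= g)%N) (hn : (3 <= n)%N)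
  (H : group) (lam : sbword n g -> H) :
  surj_hom lam ->
  subgroup_iso_Z (fun h : H => exists w, braid_image w /\ lam w = h) ->
  exists iota : H -> sbword n g,
    (forall h h' : H, qeq3 (iota (gmul h h')) (wmul (iota h) (iota h'))) /\
    (forall h h' : H, qeq3 (iota h) (iota h') -> h = h') /\
    (forall w : sbword n g, exists h : H, qeq3 (iota h) w) /\
    (forall x : sbgen n g, qeq3 (iota (lam [:: lt1 x])) [:: lt1 x]).
Proof.
move=> hlam hZ; have [lam_eq [lam_mul lam_surj]] := hlam.
have hn0 : (0 < n.-1)%N by lia.
pose i0 := Ordinal hn0.
have [s [colH s_inj]] := Zimage_collapse hn hlam hZ.
have [t colG] := quotG3_collapse g hn.
have lam_qeq3 u v : lam u = lam v -> qeq3 u v.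
  move=> e; apply: (@clsG_inj n g 3).
  rewrite !(normal_form (@clsG_eq n g 3) (@clsG_mul n g 3) (i0 := i0) colG) //.
  congr Psi; apply: (Psi_inj lam_eq lam_mul (i0 := i0) colH) => //.
  by rewrite -!(normal_form lam_eq lam_mul (i0 := i0) colH).
have qeq3_lam u v : qeq3 u v -> lam u = lam v.
  move=> /(class2_Gamma3_kernel lam_eq lam_mul (collapse_class2 lam_eq lam_mul colH (i0 := i0) erefl)).
  by rewrite /wmul lam_mul lam_winv // => /inv_uniq; rewrite invK.
pose iota h := proj1_sig (constructive_indefinite_description _ (lam_surj h)).
have iotaK h : lam (iota h) = h by rewrite /iota; case: constructive_indefinite_description.
exists iota; split; [|split; [|split]].
- by move=> h h'; apply: lam_qeq3; rewrite /wmul lam_mul !iotaK.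
- by move=> h h' /qeq3_lam; rewrite !iotaK.
- by move=> w; exists (lam w); apply: lam_qeq3; rewrite iotaK.
- by move=> x; apply: lam_qeq3; rewrite iotaK.
Qed.
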